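(* Let $p$ be a prime. Let $G=P\times A$ and $H=P_1\times B$, where $P$ and $P_1$ are finite non-abelian $p$-groups and $A$, $B$ are non-trivial finite abelian groups of order coprime to $p$. Suppose that $\Gamma_G$ and $\Gamma_H$ are irregular and $\Gamma_G\cong\Gamma_H$. Then $|A|=|B|$ and $|P|=|P_1|$; in particular $|G|=|H|$.
   Context: For a non-abelian group $G$ with center $Z(G)$, the non-commuting graph $\Gamma_G$ is the simple graph with vertex set $G\setminus Z(G)$ in which two distinct vertices $x,y$ are adjacent if and only if $xy\neq yx$. A graph is regular if all its vertices have the same degree, and irregular otherwise. *)

From HB Require Import structures.
From mathcomp Require Import all_boot all_order all_fingroup all_solvable.
Set Implicit Arguments. Unset Strict Implicit. Unset Printing Implicit Defensive.
Import GroupScope.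

Definition nc_vert (gT : finGroupType) (G : {group gT}) : {set gT} :=
  G :\: 'Z(G).

Definition nc_adj (gT : finGroupType) (G : {group gT}) (x y : gT) : bool :=
  [&& x \in nc_vert G, y \in nc_vert G, x != y & x * y != y * x].

Definition nc_deg (gT : finGroupType) (G : {group gT}) (x : gT) : nat :=
  #|[set y in nc_vert G | nc_adj G x y]|.

Definition nc_irregular (gT : finGroupType) (G : {group gT}) : Prop :=
  exists x y, [/\ x \in nc_vert G, y \in nc_vert G & nc_deg G x != nc_deg G y].

Definition nc_isomorphic (gT hT : finGroupType) (G : {group gT}) (H : {group hT})
  : Prop :=
  exists f : gT -> hT,
    [/\ {in nc_vert G &, injective f},
        f @: nc_vert G = nc_vert H &
        {in nc_vert G &, forall x y, nc_adj G x y = nc_adj H (f x) (f y)}].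

(* For G = P x A with A abelian, A is central, Z(G) = Z(P) x A, and a vertex
   x = u * a (u in P \ Z(P), a in A) has C_G[x] = C_P[u] x A.  Writing
   |Z(P)| = p^z < |C_P[u]| = p^c < |P| = p^n, the graph has |A| (p^n - p^z)
   vertices and x has degree |A| (p^n - p^c).  A graph isomorphism preserves
   the vertex count and maps x to a vertex of the same degree, so both numbers
   coincide for G and H.  Their difference |A| (p^c - p^z) has p-adic
   valuation z, and |A| (p^n - p^c) has valuation c; comparing valuations and
   cancelling yields |A| = |B| and n = n'.

   From the
   graph hypotheses only the existence of one vertex of Gamma_G is used. *)

From HB Require Import structures.
From mathcomp Require Import all_boot all_order all_fingroup all_solvable.
From mathcomp Require Import zify.
Import GroupScope.

Set Implicit Arguments.
Unset Strict Implicit.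
Unset Printing Implicit Defensive.

Lemma card_nc_vert (gT : finGroupType) (G : {group gT}) :
  #|nc_vert G| = (#|G| - #|'Z(G)|)%N.
Proof. by rewrite /nc_vert cardsD (setIidPr (center_sub G)). Qed.

Lemma nc_neighbours (gT : finGroupType) (G : {group gT}) x :
  x \in nc_vert G -> [set y in nc_vert G | nc_adj G x y] = G :\: 'C_G[x].
Proof.
rewrite /nc_vert => xV; have xG : x \in G by move: xV => /setDP[].
apply/setP=> y; rewrite in_set /nc_adj xV /= /nc_vert andbA andbb !in_setD.
have [yG | _] := boolP (y \in G); last by rewrite !andbF.
rewrite !andbT !in_setI yG /= -cent1E cent1C.
have [cyx | ncyx] := boolP (y \in 'C[x]); first by rewrite !andbF.
have -> : y \notin 'C(G) by apply: contra ncyx => cGy; exact/cent1P/(centP cGy).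
by rewrite andbT; apply/eqP=> exy; rewrite exy cent1id in ncyx.
Qed.

Lemma nc_deg_subcent1 (gT : finGroupType) (G : {group gT}) x :
  x \in nc_vert G -> nc_deg G x = (#|G| - #|'C_G[x]|)%N.
Proof.
by move=> xV; rewrite /nc_deg nc_neighbours // cardsD (setIidPr (subsetIl _ _)).
Qed.

Lemma nc_isomorphic_invariants (gT hT : finGroupType)
    (G : {group gT}) (H : {group hT}) :
  nc_isomorphic G H ->
  #|nc_vert G| = #|nc_vert H| /\
  forall x, x \in nc_vert G ->
    exists2 y, y \in nc_vert H & nc_deg H y = nc_deg G x.
Proof.
case=> f [inj_f im_f adj_f]; split; first by rewrite -im_f card_in_imset.
move=> x xV; exists (f x); first by rewrite -im_f imset_f.
have nbhd_f : [set y in nc_vert H | nc_adj H (f x) y] =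
              f @: [set y in nc_vert G | nc_adj G x y].
  apply/setP=> y'; apply/idP/imsetP.
    rewrite inE -{1}im_f => /andP[/imsetP[y yV ->] adj_xy].
    by exists y; rewrite // inE yV adj_f.
  by case=> y /setIdP[yV adj_xy] ->; rewrite inE -im_f imset_f //= -adj_f.
rewrite /nc_deg nbhd_f card_in_imset //.
by apply: sub_in2 inj_f => y /setIdP[].
Qed.

Lemma noncentral_subcent1_chain (gT : finGroupType) (G : {group gT}) u :
  u \in G -> u \notin 'Z(G) -> 'Z(G) \proper 'C_G[u] /\ 'C_G[u] \proper G.
Proof.
move=> uG uZ; split.
  rewrite properEneq; apply/andP; split.
    by apply: contraNneq uZ => ->; exact: subcent1_id.
  apply/subsetP=> w /centerP[wG cGw].
  by apply/subcent1P; split=> //; apply/esym/cGw.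
rewrite properEneq subsetIl andbT; apply: contraNneq uZ => eCG.
by apply/centerP; split=> // w; rewrite -eCG => /subcent1P[_ /esym].
Qed.

Lemma pgroup_proper_chain_orders p (gT : finGroupType) (H K P : {group gT}) :
  prime p -> p.-group P -> H \proper K -> K \proper P ->
  exists z c n, [/\ #|H| = p ^ z, #|K| = p ^ c, #|P| = p ^ n & z < c < n]%N.
Proof.
move=> p_pr pP ltHK ltKP; have sKP := proper_sub ltKP.
have pK : p.-group K := pgroupS sKP pP.
have pH : p.-group H := pgroupS (proper_sub ltHK) pK.
exists (logn p #|H|), (logn p #|K|), (logn p #|P|).
rewrite -!card_pgroup //; split=> //.
apply/andP; split; rewrite -(ltn_exp2l _ _ (prime_gt1 p_pr)) -!card_pgroup //.
  all: exact: proper_card.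
Qed.

Section DirectProductWithAbelianFactor.

Variables (gT : finGroupType) (G P A : {group gT}).
Hypotheses (defG : P \x A = G) (abA : abelian A).

Lemma abelian_factor_central : A \subset 'C(G).
Proof.
have [_ defPA cPA _] := dprodP defG.
by rewrite -defPA centM subsetI cPA; exact: abA.
Qed.

Lemma card_center_dprod_abelian : #|'Z(G)| = (#|'Z(P)| * #|A|)%N.
Proof.
by have := center_dprod defG; rewrite (center_idP abA) => /dprod_card.
Qed.

Lemma subcent1_mul_central x a : a \in 'C(G) -> 'C_G[x * a] = 'C_G[x].
Proof.
move=> cGa; apply/setP=> y; rewrite !in_setI; case yG: (y \in G) => //=.
have cya : a * y = y * a := centP cGa y yG.
by rewrite !cent1E mulgA -(mulgA x) cya mulgA (inj_eq (mulIg a)).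
Qed.

Lemma subcent1_dprod_abelian u a : u \in P -> a \in A ->
  #|'C_G[u * a]| = (#|'C_P[u]| * #|A|)%N.
Proof.
move=> uP aA; have [_ defPA cPA tiPA] := dprodP defG.
rewrite subcent1_mul_central ?(subsetP abelian_factor_central) //.
have cAu : A \subset 'C[u] by rewrite sub_cent1 (subsetP _ u uP) // centsC.
rewrite -defPA setIC -group_modr // setIC TI_cardMg //.
by apply/trivgP; rewrite -tiPA setSI ?subsetIl.
Qed.

Lemma card_nc_vert_dprod_abelian : #|nc_vert G| = (#|A| * (#|P| - #|'Z(P)|))%N.
Proof.
rewrite card_nc_vert card_center_dprod_abelian -(dprod_card defG).
by rewrite -mulnBl mulnC.
Qed.

Lemma nc_deg_dprod_abelian x : x \in nc_vert G ->
  exists2 u, u \in P :\: 'Z(P) & nc_deg G x = (#|A| * (#|P| - #|'C_P[u]|))%N.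
Proof.
move=> xV; have /setDP[xG xZ] := xV.
have [u [a [uP aA def_x _]]] := mem_dprod defG xG.
exists u.
  rewrite inE uP andbT; apply: contra xZ => uZ.
  by rewrite def_x -(dprodW (center_dprod defG)) (center_idP abA) mem_mulg.
rewrite nc_deg_subcent1 // def_x subcent1_dprod_abelian //.
by rewrite -(dprod_card defG) -mulnBl mulnC.
Qed.

End DirectProductWithAbelianFactor.

Section PrimePowerArithmetic.
Local Open Scope nat_scope.

Lemma coprime_prime_gt0 p a : prime p -> coprime a p -> 0 < a.
Proof.
move=> p_pr; rewrite lt0n; apply: contraTneq => ->.
by rewrite /coprime gcd0n gtn_eqF ?prime_gt1.
Qed.

(* For a coprime to p and z < c, the p-adic valuation of a * (p^c - p^z) is z,
   since p^c - p^z = p^z * (p^(c-z) - 1) and p^(c-z) - 1 is prime to p. *)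
Lemma logn_mul_diff_pow p a z c : prime p -> coprime a p -> z < c ->
  logn p (a * (p ^ c - p ^ z)) = z.
Proof.
move=> p_pr cap lt_zc; have p_gt1 := prime_gt1 p_pr.
have a_gt0 := coprime_prime_gt0 p_pr cap.
have k_gt0 : 0 < c - z by rewrite subn_gt0.
have eq_diff : p ^ c - p ^ z = p ^ z * (p ^ (c - z) - 1).
  by rewrite mulnBr muln1 -expnD subnKC // ltnW.
have q_gt0 : 0 < p ^ (c - z) - 1 by rewrite subn_gt0 -(expn0 p) ltn_exp2l.
have cop_q : coprime p (p ^ (c - z) - 1).
  have succ_q : (p ^ (c - z) - 1).+1 = p ^ (c - z).
    by rewrite -addn1 subnK // expn_gt0 prime_gt0.
  by rewrite -(coprime_pexpl _ _ k_gt0) -{1}succ_q coprimeSn.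
rewrite eq_diff mulnCA lognM ?muln_gt0 ?a_gt0 ?q_gt0 ?expn_gt0 ?prime_gt0 //.
rewrite pfactorK // lognM // (logn_coprime cop_q) logn_coprime 1?coprime_sym //.
by rewrite !addn0.
Qed.

Lemma mul_diff_pow_split p a z c n : 0 < p -> z <= c <= n ->
  a * (p ^ n - p ^ z) = a * (p ^ n - p ^ c) + a * (p ^ c - p ^ z).
Proof.
move=> p_gt0 /andP[le_zc le_cn].
have := leq_pexp2l p_gt0 le_zc; have := leq_pexp2l p_gt0 le_cn.
by move=> le_pc le_zp; rewrite -mulnDr; congr (a * _); lia.
Qed.

Lemma diff_pow_counts_determine p a b z c n z' c' n' :
  prime p -> coprime a p -> coprime b p ->
  z < c < n -> z' < c' < n' ->
  a * (p ^ n - p ^ z) = b * (p ^ n' - p ^ z') ->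
  a * (p ^ n - p ^ c) = b * (p ^ n' - p ^ c') ->
  a = b /\ n = n'.
Proof.
move=> p_pr cap cbp /andP[lt_zc lt_cn] /andP[lt_zc' lt_cn'] e_vert e_deg.
have p_gt0 := prime_gt0 p_pr; have p_gt1 := prime_gt1 p_pr.
have e_mid : a * (p ^ c - p ^ z) = b * (p ^ c' - p ^ z').
  apply/(@addnI (a * (p ^ n - p ^ c))).
  rewrite -mul_diff_pow_split ?(ltnW lt_zc) ?(ltnW lt_cn) // e_vert e_deg.
  by rewrite -mul_diff_pow_split ?(ltnW lt_zc') ?(ltnW lt_cn').
have ez : z = z'.
  by rewrite -(logn_mul_diff_pow p_pr cap lt_zc) e_mid logn_mul_diff_pow.
have ec : c = c'.
  by rewrite -(logn_mul_diff_pow p_pr cap lt_cn) e_deg logn_mul_diff_pow.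
subst z' c'.
have eab : a = b.
  apply/eqP; rewrite -(eqn_pmul2r (m := p ^ c - p ^ z)) ?e_mid //.
  by rewrite subn_gt0 ltn_exp2l.
subst b; split=> //; apply: (expnI p_gt1).
have a_gt0 := coprime_prime_gt0 p_pr cap.
have := ltn_exp2l c n p_gt1; have := ltn_exp2l c n' p_gt1.
have /eqP := e_deg; rewrite eqn_pmul2l //.
by rewrite lt_cn lt_cn' => /eqP; lia.
Qed.

End PrimePowerArithmetic.

Theorem mainTheorem5 (p : nat) (gT hT : finGroupType)
    (G P A : {group gT}) (H P1 B : {group hT}) :
  prime p ->
  P \x A = G -> P1 \x B = H ->
  p.-group P -> ~~ abelian P -> abelian A -> A :!=: 1 -> coprime #|A| p ->
  p.-group P1 -> ~~ abelian P1 -> abelian B -> B :!=: 1 -> coprime #|B| p ->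
  nc_irregular G -> nc_irregular H -> nc_isomorphic G H ->
  [/\ #|A| = #|B|, #|P| = #|P1| & #|G| = #|H|].
Proof.
move=> p_pr defG defH pP _ abA _ cAp pP1 _ abB _ cBp [x [_ [xV _ _]]] _ isoGH.
have [e_vert deg_iso] := nc_isomorphic_invariants isoGH.
have [y yV e_deg] := deg_iso x xV.
have [u /setDP[uP uZ] deg_x] := nc_deg_dprod_abelian defG abA xV.
have [v /setDP[vP vZ] deg_y] := nc_deg_dprod_abelian defH abB yV.
have [ltZC ltCP] := noncentral_subcent1_chain uP uZ.
have [ltZC1 ltCP1] := noncentral_subcent1_chain vP vZ.
have [z [c [n [oZ oC oP lt_zcn]]]] :=
  pgroup_proper_chain_orders p_pr pP ltZC ltCP.
have [z' [c' [n' [oZ1 oC1 oP1 lt_zcn1]]]] :=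
  pgroup_proper_chain_orders p_pr pP1 ltZC1 ltCP1.
rewrite (card_nc_vert_dprod_abelian defG abA) in e_vert.
rewrite (card_nc_vert_dprod_abelian defH abB) oZ oP oZ1 oP1 in e_vert.
rewrite deg_x deg_y oC oP oC1 oP1 in e_deg.
have [eAB enn] :=
  diff_pow_counts_determine p_pr cAp cBp lt_zcn lt_zcn1 e_vert (esym e_deg).
by rewrite -(dprod_card defG) -(dprod_card defH) oP oP1 eAB enn.
Qed.
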